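(* In the setting of the context, for every $i\in\{1,\dots,N\}$, $$C_i:=\sum_{j=1}^M\sum_{l\ne i}|U_{j,s_i}|\,|U_{j,s_l}|\le 2\sqrt{\eta\,kN^{\gamma+1}},$$ where $\eta=\max_\alpha\eta_\alpha$.
   Context: $M=kN^\gamma$ modes ($k>0$, $\gamma>1$, $M\ge N$) partitioned into $N$ disjoint sublattices $\mathcal L_1,\dots,\mathcal L_N$ of $M/N$ modes each, sublattice $\mathcal L_\alpha$ containing exactly one source mode $s_\alpha$. $U$ is an $M\times M$ unitary (of a linear-optical circuit, $\hat a_j\mapsto\sum_kU_{jk}\hat a_k$). The leakage rate of source $\alpha$ is $\eta_\alpha=\sum_{j\notin\mathcal L_\alpha}|U_{j,s_\alpha}|^2$. *)

From HB Require Import structures.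
From mathcomp Require Import all_boot all_order all_algebra.
From mathcomp Require Import all_classical all_reals all_analysis.
From mathcomp Require Import complex.
Set Implicit Arguments. Unset Strict Implicit. Unset Printing Implicit Defensive.
Import Order.TTheory GRing.Theory Num.Theory.
Local Open Scope ring_scope.

Definition cmod (R : realType) (z : R[i]) : R := Normc.normc z.

Definition unitary_mx (R : realType) (M : nat) (U : 'M[R[i]]_M) : Prop :=
  U *m (map_mx conjc U)^T = 1%:M.

(* Leakage rate of source alpha: sum over modes j outside sublattice alpha
   of |U_{j, s_alpha}|^2.  Mode j belongs to sublattice (lat j). *)
Definition leakage (R : realType) (M N : nat) (U : 'M[R[i]]_M)
  (lat : 'I_M -> 'I_N) (s : 'I_N -> 'I_M) (a : 'I_N) : R :=
  \sum_(j < M | lat j != a) cmod (U j (s a)) ^+ 2.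

(* eta = max_alpha eta_alpha (leakage rates are nonnegative, so 0 is a
   harmless neutral element). *)
Definition max_leakage (R : realType) (M N : nat) (U : 'M[R[i]]_M)
  (lat : 'I_M -> 'I_N) (s : 'I_N -> 'I_M) : R :=
  \big[Num.max/0]_(a < N) leakage U lat s a.

Definition crosstalk (R : realType) (M N : nat) (U : 'M[R[i]]_M)
  (s : 'I_N -> 'I_M) (i : 'I_N) : R :=
  \sum_(j < M) \sum_(l < N | l != i) cmod (U j (s i)) * cmod (U j (s l)).

From HB Require Import structures.
From mathcomp Require Import all_boot all_order all_algebra.
From mathcomp Require Import all_classical all_reals all_analysis.
From mathcomp Require Import complex.
Import Order.TTheory GRing.Theory Num.Theory.
Local Open Scope ring_scope.
From mathcomp Require Import ring lra.

(* Write x_{j,l} = |U_{j,s_l}|.  Every column of the unitary U is a unit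
   vector, so by a Cauchy-Schwarz estimate the part of an overlap
   sum_j x_{j,a} x_{j,b} over the modes j outside sublattice a is at most
   sqrt(eta_a), and likewise with a and b exchanged.  For a <> b every mode
   lies outside sublattice a or outside sublattice b, hence each overlap is
   at most sqrt(eta_a) + sqrt(eta_b) <= 2 sqrt(eta).  Summing over the at
   most N indices l <> i gives C_i <= 2 N sqrt(eta), and finally
   N^2 <= M N = k N^(gamma+1) because N <= M. *)

Lemma normc_cmod (R : realType) (z : R[i]) : `|z| = ((cmod z)%:C)%C.
Proof. by case: z. Qed.

Lemma cmod_ge0 (R : realType) (z : R[i]) : 0 <= cmod z.
Proof. by case: z => a b; rewrite /cmod /= sqrtr_ge0. Qed.

(* Every column of a unitary matrix is a unit vector (U^dagger U = 1 follows
   from U U^dagger = 1 for square matrices). *)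
Lemma unitary_col_norm (R : realType) (M : nat) (U : 'M[R[i]]_M) (c : 'I_M) :
  unitary_mx U -> \sum_(j < M) cmod (U j c) ^+ 2 = 1.
Proof.
move=> /mulmx1C /(congr1 (fun A : 'M[R[i]]_M => A c c)).
rewrite !mxE eqxx /= => diag_c.
suff: ((\sum_(j < M) cmod (U j c) ^+ 2)%:C)%C = (1 : R[i]) by case.
apply: etrans diag_c; rewrite rmorph_sum /=; apply: eq_bigr => j _.
by rewrite !mxE rmorphXn /= -normc_cmod sqr_normc mulrC.
Qed.

(* Cauchy-Schwarz against a unit vector: if sum_P a^2 <= e and
   sum_P b^2 <= 1 then sum_P a b <= sqrt e.  The proof sums the weighted
   AM-GM inequality 2 q a b <= a^2 + q^2 b^2 with q = sqrt e. *)
Lemma sum_mul_le_sqrt (R : rcfType) (I : finType) (P : pred I)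
    (a b : I -> R) (e : R) :
  \sum_(j | P j) a j ^+ 2 <= e -> \sum_(j | P j) b j ^+ 2 <= 1 ->
  \sum_(j | P j) a j * b j <= Num.sqrt e.
Proof.
move=> sum_a sum_b.
have sum_a_ge0 : 0 <= \sum_(j | P j) a j ^+ 2 by apply: sumr_ge0 => j _; exact: sqr_ge0.
have [e0 | e_neq0] := eqVneq e 0.
  have a_eq0 j : P j -> a j = 0.
    move=> Pj; apply/eqP; rewrite -sqrf_eq0; apply/eqP.
    move: j Pj; apply/psumr_eq0P; first by move=> j _; exact: sqr_ge0.
    by apply: le_anti; rewrite sum_a_ge0 andbT -[leRHS]e0.
  by rewrite e0 sqrtr0 big1 // => j /a_eq0 ->; rewrite mul0r.
have e_gt0 : 0 < e by rewrite lt_neqAle eq_sym e_neq0 (le_trans sum_a_ge0).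
have q_gt0 : 0 < Num.sqrt e by rewrite sqrtr_gt0.
have qq : Num.sqrt e ^+ 2 = e by rewrite sqr_sqrtr // ltW.
set q := Num.sqrt e in q_gt0 qq *.
have amgm j : 2 * q * (a j * b j) <= a j ^+ 2 + e * b j ^+ 2.
  rewrite -qq -subr_ge0.
  suff -> : a j ^+ 2 + q ^+ 2 * b j ^+ 2 - 2 * q * (a j * b j)
    = (a j - q * b j) ^+ 2 by exact: sqr_ge0.
  by ring.
rewrite -(@ler_pM2l _ (2 * q)) ?mulr_gt0 // mulr_sumr.
apply: le_trans (ler_sum _ (fun j _ => amgm j)) _.
rewrite big_split /= -mulr_sumr.
have : e * \sum_(j | P j) b j ^+ 2 <= e by rewrite ler_piMr // ltW.
by rewrite -mulrA -expr2 qq; lra.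
Qed.

Section Overlap.

Context {R : realType} {M N : nat} (U : 'M[R[i]]_M).
Context (lat : 'I_M -> 'I_N) (s : 'I_N -> 'I_M).
Hypothesis unitaryU : unitary_mx U.

Lemma leakage_ge0 (a : 'I_N) : 0 <= leakage U lat s a.
Proof. by apply: sumr_ge0 => j _; exact: sqr_ge0. Qed.

Lemma max_leakage_ge0 : 0 <= max_leakage U lat s.
Proof.
by apply: (big_ind (fun y : R => 0 <= y)) => // [x y x0 _|a _];
  [rewrite le_max x0 | exact: leakage_ge0].
Qed.

Lemma leakage_le_max (a : 'I_N) : leakage U lat s a <= max_leakage U lat s.
Proof. by rewrite /max_leakage (bigD1 a) //= le_max lexx. Qed.

Lemma outer_overlap_le (a b : 'I_N) :
  \sum_(j < M | lat j != a) cmod (U j (s a)) * cmod (U j (s b))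
    <= Num.sqrt (leakage U lat s a).
Proof.
apply: sum_mul_le_sqrt => //.
rewrite -(@unitary_col_norm _ _ U (s b) unitaryU) [leRHS](bigID (fun j => lat j != a)) /=.
by rewrite lerDl; apply: sumr_ge0 => j _; exact: sqr_ge0.
Qed.

(* Two distinct sources overlap by at most sqrt(eta_a) + sqrt(eta_b): every
   mode lies outside sublattice a or outside sublattice b. *)
Lemma overlap_le {a b : 'I_N} : a != b ->
  \sum_(j < M) cmod (U j (s a)) * cmod (U j (s b))
    <= Num.sqrt (leakage U lat s a) + Num.sqrt (leakage U lat s b).
Proof.
move=> neq_ab; rewrite (bigID (fun j => lat j != a)) /=.
apply: lerD; first exact: outer_overlap_le.
apply: le_trans (outer_overlap_le b a).
rewrite [leRHS]big_mkcond [leLHS]big_mkcond /=; apply: ler_sum => j _.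
case: (lat j =P a) => [-> | _] /=; first by rewrite neq_ab mulrC.
by case: ifP => _; rewrite ?mulr_ge0 ?cmod_ge0.
Qed.

Lemma crosstalk_le (i : 'I_N) :
  crosstalk U s i <= 2 * Num.sqrt (max_leakage U lat s) * N%:R.
Proof.
set q := Num.sqrt (max_leakage U lat s).
have q_ge0 : 0 <= q by exact: sqrtr_ge0.
have sqrt_leak a : Num.sqrt (leakage U lat s a) <= q.
  by apply: ler_wsqrtr; exact: leakage_le_max.
have -> : 2 * q * N%:R = \sum_(l < N) 2 * q by rewrite sumr_const card_ord mulr_natr.
rewrite /crosstalk exchange_big /=.
apply: (@le_trans _ _ (\sum_(l < N | l != i) 2 * q)).
  apply: ler_sum => l neq_li; rewrite eq_sym in neq_li.
  by apply: le_trans (overlap_le neq_li) _; rewrite mulr_natl mulr2n lerD.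
rewrite [leRHS](bigID (fun l => l != i)) /= lerDl.
by apply: sumr_ge0 => l _; rewrite mulr_ge0.
Qed.

End Overlap.

(* sqrt(x) n <= sqrt(x m n) whenever n <= m: it is sqrt(x n^2). *)
Lemma sqrt_mul_nat_le (R : rcfType) (x : R) (m n : nat) : 0 <= x -> (n <= m)%N ->
  Num.sqrt x * n%:R <= Num.sqrt (x * (m%:R * n%:R)).
Proof.
move=> x0 le_nm.
rewrite -[n%:R in leLHS]ger0_norm // -sqrtr_sqr -sqrtrM // ler_wsqrtr //.
by rewrite expr2 ler_wpM2l // ler_wpM2r // ler_nat.
Qed.

Theorem lemma4 (R : realType) (k g : R) (M N : nat)
  (U : 'M[R[i]]_M) (lat : 'I_M -> 'I_N) (s : 'I_N -> 'I_M) :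
  0 < k -> 1 < g -> (N <= M)%N ->
  M%:R = k * (N%:R `^ g) ->
  (forall a : 'I_N, (#|[set j | lat j == a]| * N)%N = M) ->
  (forall a : 'I_N, lat (s a) = a) ->
  unitary_mx U ->
  forall i : 'I_N,
    crosstalk U s i <=
      2 * Num.sqrt (max_leakage U lat s * (k * N%:R `^ (g + 1))).
Proof.
move=> _ _ le_NM M_eq _ _ unitaryU i.
have N_gt0 : (0 < N)%N by apply: leq_ltn_trans (ltn_ord i).
have -> : k * N%:R `^ (g + 1) = M%:R * N%:R.
  by rewrite M_eq powRD ?powRr1 ?ler0n ?mulrA // pnatr_eq0 -lt0n N_gt0 implybT.
apply: le_trans (crosstalk_le U lat s unitaryU i) _.
rewrite -mulrA ler_wpM2l //.
apply: sqrt_mul_nat_le le_NM.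
exact: max_leakage_ge0.
Qed.
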